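(* Let $\mathbb{S}\in\mathbb{Z}^{N_X\times N_e}$, let $\mathbb{V}\in\mathbb{R}^{N_e\times N_z}$ be a matrix whose columns form a basis of $\mathrm{Ker}\,\mathbb{S}$, and let $\Psi^*_x$ be a dissipation function on $\mathbb{R}^{N_e}$ (for a fixed $x$). For a given $\zeta\in\mathrm{Im}\,\mathbb{V}^T=\mathbb{R}^{N_z}$, define $$f^\lozenge(x,\zeta):=\arg\min_{f\in\mathbb{R}^{N_e}}\Psi^*_x(f)\quad\text{subject to } \mathbb{V}^Tf=\zeta.$$ Then $f^\lozenge(x,\zeta)$ is a steady (zero-velocity) force: $j^\lozenge:=\nabla\Psi^*_x(f^\lozenge(x,\zeta))$ satisfies $\mathbb{S}j^\lozenge=0$.
   Context: A dissipation function on $\mathbb{R}^{N_e}$ is a strictly convex, continuously differentiable, $1$-coercive ($\psi(f)/\|f\|\to\infty$ as $\|f\|\to\infty$), even function $\psi$ with $\psi(0)=0$. Note $\mathrm{Ker}\,\mathbb{V}^T=\mathrm{Im}\,\mathbb{S}^T$ and $\mathrm{Im}\,\mathbb{V}=\mathrm{Ker}\,\mathbb{S}$. *)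

From HB Require Import structures.
From mathcomp Require Import all_boot all_order all_algebra.
From mathcomp Require Import all_classical all_reals all_analysis.
Set Implicit Arguments. Unset Strict Implicit. Unset Printing Implicit Defensive.
Import Order.TTheory GRing.Theory Num.Theory.
Import numFieldNormedType.Exports.
Local Open Scope ring_scope.

Section Dissipation.
Variables (R : realType) (n : nat).

Definition partial (psi : 'cV[R]_n -> R) (i : 'I_n) (x : 'cV[R]_n) : R :=
  'D_(delta_mx i 0) psi x.

Definition grad (psi : 'cV[R]_n -> R) (x : 'cV[R]_n) : 'cV[R]_n :=
  \col_i partial psi i x.

Definition strictly_convex (psi : 'cV[R]_n -> R) : Prop :=
  forall f g : 'cV[R]_n, f != g -> forall t : R, 0 < t -> t < 1 ->
    psi (t *: f + (1 - t) *: g) < t * psi f + (1 - t) * psi g.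

Definition C1 (psi : 'cV[R]_n -> R) : Prop :=
  (forall x, differentiable psi x) /\ (forall i, continuous (partial psi i)).

Definition coercive1 (psi : 'cV[R]_n -> R) : Prop :=
  forall M : R, exists r : R, forall f : 'cV[R]_n, r < `|f| -> M < psi f / `|f|.

Definition even_fun (psi : 'cV[R]_n -> R) : Prop := forall f, psi (- f) = psi f.

Definition dissipation_function (psi : 'cV[R]_n -> R) : Prop :=
  [/\ strictly_convex psi, C1 psi, coercive1 psi, even_fun psi & psi 0 = 0].

End Dissipation.

Definition is_argmin_constr (R : realType) (n m : nat) (psi : 'cV[R]_n -> R)
  (A : 'M[R]_(m, n)) (b : 'cV[R]_m) (f : 'cV[R]_n) : Prop :=
  A *m f = b /\ forall g : 'cV[R]_n, A *m g = b -> psi f <= psi g.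

(* Moving along a feasible direction h (one with V^T h = 0) keeps the
   constraint V^T f = zeta, so minimality of f along the line t |-> f + t h
   forces grad psi f . h = 0.  Hence grad psi f annihilates Ker V^T, i.e. it
   lies in the column space of V, which is Ker S.  Only differentiability of
   psi is needed: convexity, coercivity and the freeness of the columns of V
   serve the existence and uniqueness of the minimiser, not this property. *)
From HB Require Import structures.
From mathcomp Require Import all_boot all_order all_algebra.
From mathcomp Require Import all_classical all_reals all_analysis.
Set Implicit Arguments. Unset Strict Implicit. Unset Printing Implicit Defensive.
Import Order.TTheory GRing.Theory Num.Theory.
Import numFieldNormedType.Exports.
Local Open Scope ring_scope.

Section LineMinimum.
Variables (R : realFieldType) (V : normedModType R).

Lemma derive_line (W : normedModType R) (f : V -> W) (x v : V) :
  'D_v f x = 'D_1 (fun t : R => f (t *: v + x)) 0.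
Proof.
rewrite /derive; do 2 f_equal; apply/funext => h /=.
by rewrite addr0 scale0r add0r [h *: 1]mulr1.
Qed.

Lemma derive_eq0_line_min (psi : V -> R) (x v : V) :
  (forall t : R, differentiable psi (t *: v + x)) ->
  (forall t : R, psi x <= psi (t *: v + x)) ->
  'D_v psi x = 0.
Proof.
move=> psi_diff psi_min; pose g t := psi (t *: v + x).
have g_der t : derivable g t 1.
  by apply/derivable1_diffP; apply: differentiable_comp.
have g'0 : is_derive (0 : R) 1 g 0.
  apply: (@derive1_at_min _ g (-1) 1) => //.
  - by rewrite in_itv /= ltrN10 ltr01.
  - by move=> t _; rewrite /g scale0r add0r.
by rewrite derive_line derive_val.
Qed.

End LineMinimum.

Lemma derive_grad (R : realType) n (psi : 'cV[R]_n -> R) (x v : 'cV[R]_n) :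
  differentiable psi x -> 'D_v psi x = ((grad psi x)^T *m v) 0 0.
Proof.
move=> psi_diff; rewrite deriveE // {1}(matrix_sum_delta v) linear_sum mxE.
apply: eq_bigr => i _; rewrite big_ord1 linearZ /= !mxE /partial deriveE //.
exact: mulrC.
Qed.

Lemma submx_of_annihilates_ker (F : fieldType) m n (A : 'M[F]_(m, n))
    (x : 'rV[F]_n) :
  (forall h : 'cV[F]_n, A *m h = 0 -> x *m h = 0) -> (x <= A)%MS.
Proof.
move=> x_ann; rewrite submxE; apply/eqP/matrixP => i j.
have A_col : A *m col j (cokermx A) = 0 by rewrite colE mulmxA mulmx_coker mul0mx.
have := congr1 (fun M : 'M[F]_1 => M i 0) (x_ann _ A_col).
by rewrite colE mulmxA -colE mxE => ->; rewrite !mxE.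
Qed.

Lemma argmin_constr_grad_submx (R : realType) n m (psi : 'cV[R]_n -> R)
    (A : 'M[R]_(m, n)) (b : 'cV[R]_m) (f : 'cV[R]_n) :
  (forall y, differentiable psi y) -> is_argmin_constr psi A b f ->
  ((grad psi f)^T <= A)%MS.
Proof.
move=> psi_diff [Af f_min]; apply: submx_of_annihilates_ker => h Ah.
apply/matrixP => i j; rewrite !ord1 [RHS]mxE -derive_grad; last exact: psi_diff.
apply: derive_eq0_line_min => // t; apply: f_min.
by rewrite mulmxDr -scalemxAr Ah scaler0 add0r.
Qed.

Theorem mainTheorem11 (R : realType) (NX Ne Nz : nat)
  (S : 'M[int]_(NX, Ne)) (V : 'M[R]_(Ne, Nz))
  (* the columns of V form a basis of Ker S (S viewed as a real matrix) *)
  (HVfree : row_free V^T)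
  (HVker : (V^T == kermx (map_mx (fun z : int => z%:~R) S)^T)%MS)
  (psi : 'cV[R]_Ne -> R) (Hpsi : dissipation_function psi)
  (zeta : 'cV[R]_Nz) (fdiam : 'cV[R]_Ne)
  (Hf : is_argmin_constr psi V^T zeta fdiam) :
  map_mx (fun z : int => z%:~R) S *m grad psi fdiam = 0.
Proof.
case: Hpsi => _ [psi_diff _] _ _ _.
have gradV := argmin_constr_grad_submx psi_diff Hf.
case/andP: HVker => /(submx_trans gradV)/sub_kermxP gradS _.
by rewrite -[LHS]trmxK trmx_mul gradS trmx0.
Qed.
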